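(* Let $M$ be a finite rectangular monoid, $k$ a field which is a splitting field for the maximal subgroups of $M$, and $X,Y\in\Lambda(M)$ incomparable. Let $A$ be a $k[G_Y\times G_X^{op}]$-module, regarded as an $M$-bimodule via $m\cdot a\cdot m'=\rho_Y(m)a\rho_X(m')$. Then $H^1(M,A)\cong\mathrm{Hom}_{k[G_Y\times G_X^{op}]}(V_{X,Y},A)$, where $V_{X,Y}=k[e_YMe_X]/W_{X,Y}$ and $W_{X,Y}$ is the subspace spanned by $\nabla Y\nabla X\cap e_YMe_X$ together with all elements $e_Ymne_X+e_Yme_Ye_Xne_X-e_Yme_Yne_X-e_Yme_Xne_X$ with $m,n\in M$.
   Context: $E(M)$ idempotents, $m^\omega$ idempotent power of $m$. $M$ rectangular: each $\{f\in E(M):MfM=MeM\}$ closed under multiplication. $\Lambda(M)$: ideals $MeM$, $e\in E(M)$, ordered by inclusion; $\sigma(m)=Mm^\omega M$; $\nabla X=\{m: X\not\subseteq MmM\}$, $\nabla Y\nabla X=\{ab:a\in\nabla Y,b\in\nabla X\}$. Fixed $e_X$ with $Me_XM=X$; $G_X$ = group of units of $e_XMe_X$; $\rho_X(m)=e_Xme_X$ if $X\subseteq\sigma(m)$ and $0\in kG_X$ otherwise. $W_{X,Y}$ is a $G_Y\times G_X^{op}$-submodule of $k[e_YMe_X]$ (left multiplication by $G_Y$, right by $G_X$). $H^1(M,A)$ is the space of derivations $d\colon M\to A$ ($d(mn)=md(n)+d(m)n$) modulo inner derivations $m\mapsto ma-am$. *)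

From mathcomp Require Import all_boot all_order all_algebra.
Set Implicit Arguments. Unset Strict Implicit. Unset Printing Implicit Defensive.
Import GRing.Theory.
Local Open Scope ring_scope.

Record finMonoid := FinMonoid {
  mcar :> finType;
  mmul : mcar -> mcar -> mcar;
  mone : mcar;
  mmulA : forall a b c, mmul a (mmul b c) = mmul (mmul a b) c;
  mmul1 : forall a, mmul mone a = a;
  mmulm1 : forall a, mmul a mone = a }.

Section MonoidDefs.
Variable M : finMonoid.
Local Notation "a ** b" := (mmul a b) (at level 40, left associativity).

Definition mexp (m : M) (n : nat) : M := iter n (mmul m) (mone M).

Definition idem : {set M} := [set e | e ** e == e].

Definition ideal (m : M) : {set M} := [set a ** m ** b | a in M, b in M].

Definition inLambda (X : {set M}) : Prop := exists2 e, e \in idem & X = ideal e.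

Definition rectangular : Prop :=
  forall e f g, e \in idem -> f \in idem -> g \in idem ->
    ideal f = ideal e -> ideal g = ideal e ->
    (f ** g \in idem) /\ ideal (f ** g) = ideal e.

(* m^omega : the idempotent power of m (it occurs among m^1..m^|M|) *)
Definition omega (m : M) : M :=
  odflt (mone M) [pick e | (e \in idem) &&
      [exists n : 'I_#|M|.+1, (0 < n)%N && (e == mexp m n)]].

Definition sigma (m : M) : {set M} := ideal (omega m).

Definition nabla (X : {set M}) : {set M} := [set m | ~~ (X \subset ideal m)].

Definition nablaprod (Y X : {set M}) : {set M} :=
  [set a ** b | a in nabla Y, b in nabla X].

Definition corner (e f : M) : {set M} := [set x | e ** x ** f == x].

Definition units_of (e : M) : {set M} :=
  [set g | (e ** g ** e == g) &&
     [exists h, [&& e ** h ** e == h, g ** h == e & h ** g == e]]].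

(* k is a splitting field for the finite group G_e: every irreducible
   (matrix) representation of G_e over k has only scalar endomorphisms *)
Definition splitting_for (k : fieldType) (e : M) : Prop :=
  forall (n : nat) (rho : M -> 'M[k]_n),
    (forall g h, g \in units_of e -> h \in units_of e ->
       rho (g ** h) = rho g *m rho h) ->
    rho e = 1%:M ->
    (0 < n)%N ->
    (forall U : 'M[k]_n, (forall g, g \in units_of e -> (U *m rho g <= U)%MS) ->
        (U == 0 :> 'M[k]_n) || row_full U) ->
    forall B : 'M[k]_n, (forall g, g \in units_of e -> B *m rho g = rho g *m B) ->
      exists c : k, B = c%:M.

Definition splitting_field_maxsub (k : fieldType) : Prop :=
  forall e, e \in idem -> splitting_for k e.

End MonoidDefs.

Section ModuleDefs.
Variables (M : finMonoid) (k : fieldType) (A : lmodType k).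
Local Notation "a ** b" := (mmul a b) (at level 40, left associativity).
Variables (X Y : {set M}) (eX eY : M).
(* the k[G_Y x G_X^op]-module structure on A: lY g a = g.a, rX h a = a.h *)
Variables (lY rX : M -> A -> A).

Definition GYGXop_module : Prop :=
  (forall g c a b, g \in units_of eY -> lY g (c *: a + b) = c *: lY g a + lY g b) /\
  (forall h c a b, h \in units_of eX -> rX h (c *: a + b) = c *: rX h a + rX h b) /\
  (forall g g' a, g \in units_of eY -> g' \in units_of eY ->
         lY (g ** g') a = lY g (lY g' a)) /\
  (forall a, lY eY a = a) /\
  (forall h h' a, h \in units_of eX -> h' \in units_of eX ->
         rX (h ** h') a = rX h' (rX h a)) /\
  (forall a, rX eX a = a) /\
  (forall g h a, g \in units_of eY -> h \in units_of eX ->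
         lY g (rX h a) = rX h (lY g a)).

(* M-bimodule structure  m.a.m' = rho_Y(m) a rho_X(m') *)
Definition actL (m : M) (a : A) : A :=
  if (Y \subset sigma m) && (eY ** m ** eY \in units_of eY)
  then lY (eY ** m ** eY) a else 0.
Definition actR (a : A) (m : M) : A :=
  if (X \subset sigma m) && (eX ** m ** eX \in units_of eX)
  then rX (eX ** m ** eX) a else 0.

Definition derivation (d : {ffun M -> A}) : Prop :=
  forall m n, d (m ** n) = actL m (d n) + actR (d m) n.

Definition inner_derivation (d : {ffun M -> A}) : Prop :=
  exists a : A, forall m, d m = actL m a - actR a m.

(* the group algebra k[M] (formal linear combinations); basis vectors *)
Definition delta (x : M) : {ffun M -> k} := [ffun y => (y == x)%:R].

(* spanning set of W_{X,Y} inside k[e_Y M e_X] *)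
Definition Wgen (w : {ffun M -> k}) : Prop :=
  (exists2 x, x \in nablaprod Y X :&: corner eY eX & w = delta x) \/
  (exists m n, w = delta (eY ** m ** n ** eX) + delta (eY ** m ** eY ** eX ** n ** eX)
                   - delta (eY ** m ** eY ** n ** eX) - delta (eY ** m ** eX ** n ** eX)).

Definition lin_ext (phi : {ffun M -> A}) (c : {ffun M -> k}) : A :=
  \sum_x c x *: phi x.

(* Hom_{k[G_Y x G_X^op]}(V_{X,Y}, A), V = k[e_Y M e_X]/W, described by the
   values phi on the basis e_Y M e_X (phi = 0 outside e_Y M e_X) *)
Definition homV (phi : {ffun M -> A}) : Prop :=
  [/\ forall x, x \notin corner eY eX -> phi x = 0,
      forall w, Wgen w -> lin_ext phi w = 0 &
      forall g h x, g \in units_of eY -> h \in units_of eX -> x \in corner eY eX ->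
         phi (g ** x ** h) = lY g (rX h (phi x))].

End ModuleDefs.

(* Rectangularity makes m |-> e m e multiplicative on those m whose corner
   e m e is a unit of eMe, and incomparability of X and Y makes M e_X M act by
   zero on the left of A and M e_Y M by zero on the right.  Hence a derivation
   d is governed by its restriction to the corner e_Y M e_X: this restriction
   kills nabla Y nabla X and the generators of W_{X,Y} and is equivariant, i.e.
   it is a homomorphism V_{X,Y} -> A.  Conversely phi : V_{X,Y} -> A comes
   from the derivation m |-> phi(e_Y m e_X) - phi(e_Y m e_Y e_X), and a
   derivation vanishing on the corner is the inner derivation of d(e_Y). *)

From mathcomp Require Import all_boot all_order all_algebra.
Import GRing.Theory.
Local Open Scope ring_scope.
Set Implicit Arguments. Unset Strict Implicit. Unset Printing Implicit Defensive.

Local Notation "a ** b" := (mmul a b) (at level 40, left associativity).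

Section IdealsAndCorners.

Variable M : finMonoid.
Implicit Types (e g x z a b : M).

Lemma idemP e : e \in idem M -> e ** e = e.
Proof. by rewrite inE => /eqP. Qed.

Lemma units_ofP e g :
  reflect (e ** g ** e = g /\ exists h, [/\ e ** h ** e = h, g ** h = e & h ** g = e])
          (g \in units_of e).
Proof.
rewrite inE; apply: (iffP andP).
  by case=> /eqP-> /existsP[h /and3P[/eqP ? /eqP ? /eqP ?]]; split=> //; exists h.
case=> -> [h [eh gh hg]]; split=> //; apply/existsP; exists h.
by rewrite eh gh hg !eqxx.
Qed.

Lemma idem_unit e : e \in idem M -> e \in units_of e.
Proof. by move=> /idemP ee; apply/units_ofP; rewrite !ee; split=> //; exists e; rewrite !ee. Qed.

Lemma mem_ideal a x b : a ** x ** b \in ideal x.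
Proof. by apply/imset2P; exists a b. Qed.

Lemma mem_idealMl a x : a ** x \in ideal x.
Proof. by rewrite -[a ** x]mmulm1 mem_ideal. Qed.

Lemma mem_idealMr x b : x ** b \in ideal x.
Proof. by rewrite -[x ** b]mmul1 mmulA mem_ideal. Qed.

Lemma mem_ideal_self x : x \in ideal x.
Proof. by have := mem_idealMr x (mone M); rewrite mmulm1. Qed.

Lemma ideal_sub z x : z \in ideal x -> ideal z \subset ideal x.
Proof.
case/imset2P=> a b _ _ ->; apply/subsetP=> y /imset2P[c d _ _ ->].
by have := mem_ideal (c ** a) x (b ** d); rewrite !mmulA.
Qed.

Lemma idealMl a z x : z \in ideal x -> a ** z \in ideal x.
Proof. by move=> /ideal_sub/subsetP; apply; apply: mem_idealMl. Qed.

Lemma idealMr a z x : z \in ideal x -> z ** a \in ideal x.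
Proof. by move=> /ideal_sub/subsetP; apply; apply: mem_idealMr. Qed.

Variable e : M.
Hypothesis e_idem : e \in idem M.

Lemma corner_mull z : e ** z ** e = z -> e ** z = z.
Proof. by move=> <-; rewrite !mmulA (idemP e_idem). Qed.

Lemma corner_mulr z : e ** z ** e = z -> z ** e = z.
Proof. by move=> <-; rewrite -!mmulA (idemP e_idem). Qed.

Lemma ideal_sub_of_unit x : e ** x ** e \in units_of e -> ideal e \subset ideal x.
Proof.
case/units_ofP=> _ [h [_ _ he]]; apply: ideal_sub.
by rewrite -{1}he !mmulA mem_ideal.
Qed.

(* Left multiplication by t is injective on the finite set eMe when s t = e,
   hence onto, so e = t z for some z of eMe, and then z = s. *)
Lemma corner_inv_sym s t :
  e ** s ** e = s -> e ** t ** e = t -> s ** t = e -> t ** s = e.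
Proof.
move=> es et st.
set C := corner e e.
have Cl z : z \in C -> e ** z = z by rewrite inE => /eqP; apply: corner_mull.
have Cr z : z \in C -> z ** e = z by rewrite inE => /eqP; apply: corner_mulr.
have tC_sub : [set t ** z | z in C] \subset C.
  apply/subsetP=> y /imsetP[z Cz ->]; rewrite inE.
  by rewrite !mmulA -(mmulA (e ** t)) (Cr _ Cz) (corner_mull et).
have t_inj : {in C &, injective (mmul t)}.
  by move=> z1 z2 C1 C2 tz; rewrite -(Cl _ C1) -(Cl _ C2) -st -!mmulA tz.
have tC : [set t ** z | z in C] = C.
  by apply/eqP; rewrite eqEcard tC_sub /= card_in_imset.
have : e \in C by rewrite inE !(idemP e_idem).
rewrite -tC => /imsetP[z Cz ez].
suff -> : s = z by rewrite ez.
by rewrite -[s](corner_mulr es) ez mmulA st (Cl _ Cz).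
Qed.

Lemma corner_unit z : e ** z ** e = z -> e \in ideal z -> z \in units_of e.
Proof.
move=> ez /imset2P[p q _ _ e_pzq].
have ee : e ** e = e := idemP e_idem.
have ee_r t : t ** e ** e = t ** e by rewrite -mmulA ee.
set a := e ** p ** e; set b := e ** q ** e.
have ea : e ** a ** e = a by rewrite /a !mmulA !ee_r ee.
have eb : e ** b ** e = b by rewrite /b !mmulA !ee_r ee.
have azb : a ** (z ** b) = e.
  rewrite /a /b !mmulA -(mmulA _ e z) (corner_mull ez) -(mmulA _ z e) (corner_mulr ez).
  have -> : e ** p ** z ** q ** e = e ** (p ** z ** q) ** e by rewrite !mmulA.
  by rewrite -e_pzq !ee.
clearbody a b.
have ezb : e ** (z ** b) ** e = z ** b.
  by rewrite !mmulA (corner_mull ez) -(mmulA _ b e) (corner_mulr eb).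
have eaz : e ** (a ** z) ** e = a ** z.
  by rewrite !mmulA (corner_mull ea) -mmulA (corner_mulr ez).
have zba : z ** b ** a = e by apply: (corner_inv_sym ea ezb azb).
have baz : b ** (a ** z) = e by apply: corner_inv_sym eaz eb _; rewrite -mmulA.
apply/units_ofP; split=> //; exists (b ** a); split.
- by rewrite (mmulA e) (corner_mull eb) -mmulA (corner_mulr ea).
- by rewrite mmulA.
- by rewrite -mmulA.
Qed.

Lemma units_ofM a b : a \in units_of e -> b \in units_of e -> a ** b \in units_of e.
Proof.
move=> /units_ofP[ea [a' [ea' aa' a'a]]] /units_ofP[eb [b' [eb' bb' b'b]]].
apply/units_ofP; split.
  by rewrite (mmulA e) (corner_mull ea) -mmulA (corner_mulr eb).
exists (b' ** a'); split.
- by rewrite (mmulA e) (corner_mull eb') -mmulA (corner_mulr ea').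
- by rewrite !mmulA -(mmulA a b b') bb' (corner_mulr ea).
- by rewrite !mmulA -(mmulA b' a' a) a'a (corner_mulr eb').
Qed.

End IdealsAndCorners.

Lemma ideal_eq (M : finMonoid) (x y : M) :
  x \in ideal y -> y \in ideal x -> ideal x = ideal y.
Proof. by move=> xy yx; apply/eqP; rewrite eqEsubset !ideal_sub. Qed.

Section Rectangular.

Variable M : finMonoid.
Hypothesis M_rect : rectangular M.
Variable e : M.
Hypothesis e_idem : e \in idem M.

(* By rectangularity f h is an idempotent of the J-class of e lying in eMe,
   hence a unit of eMe; an idempotent unit is the identity e. *)
Lemma rect_idem_mul_eq (f h : M) : f \in idem M -> h \in idem M ->
  ideal f = ideal e -> ideal h = ideal e -> e ** f = f -> h ** e = h -> f ** h = e.
Proof.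
move=> f_idem h_idem fJe hJe ef he.
have [fh_idem fhJe] := M_rect e_idem f_idem h_idem fJe hJe.
have efhe : e ** (f ** h) ** e = f ** h by rewrite (mmulA e) ef -mmulA he.
have : f ** h \in units_of e by apply: corner_unit; rewrite // fhJe mem_ideal_self.
case/units_ofP=> _ [u [_ fhu _]].
by rewrite -(corner_mulr e_idem efhe) -{1}fhu mmulA (idemP fh_idem) fhu.
Qed.

Lemma corner_unitM (x y : M) :
  e ** x ** e \in units_of e -> e ** y ** e \in units_of e ->
  e ** (x ** y) ** e = (e ** x ** e) ** (e ** y ** e).
Proof.
move Da: (e ** x ** e) => a /units_ofP[ea [a' [ea' aa' a'a]]].
move Db: (e ** y ** e) => b /units_ofP[eb [b' [eb' bb' b'b]]].
set f := a' ** x; set h := y ** b'.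
have ef : e ** f = f by rewrite /f mmulA (corner_mull e_idem ea').
have he : h ** e = h by rewrite /h -mmulA (corner_mulr e_idem eb').
have fe : f ** e = e by rewrite -[RHS]a'a -Da /f !mmulA (corner_mulr e_idem ea').
have eh : e ** h = e by rewrite -[RHS]bb' -Db /h -!mmulA (corner_mull e_idem eb').
have f_idem : f \in idem M.
  by rewrite inE -{2}ef mmulA fe ef.
have h_idem : h \in idem M.
  by rewrite inE -{1}he -mmulA eh he.
have fJe : ideal f = ideal e by apply: ideal_eq; [rewrite -ef | rewrite -fe]; apply: mem_idealMr.
have hJe : ideal h = ideal e by apply: ideal_eq; [rewrite -he | rewrite -eh]; apply: mem_idealMl.
have fh := rect_idem_mul_eq f_idem h_idem fJe hJe ef he.
have <- : a ** (f ** h) ** b = a ** b by rewrite fh (corner_mulr e_idem ea).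
by rewrite /f /h !mmulA aa' -(mmulA _ b' b) b'b.
Qed.

Lemma corner_unitX (x : M) n :
  e ** x ** e \in units_of e -> e ** mexp x n.+1 ** e \in units_of e.
Proof.
move=> ux; elim: n => [|n IHn]; first by rewrite /mexp /= mmulm1.
by rewrite [mexp x _]/= (corner_unitM ux IHn) units_ofM.
Qed.

Lemma ideal_sub_sigma (x : M) : e ** x ** e \in units_of e -> ideal e \subset sigma x.
Proof.
move=> ux; rewrite /sigma /omega; case: pickP => [f|_] /=.
  case/andP=> _ /existsP[[[|n] lt_n] /andP[//= _ /eqP->]].
  exact/ideal_sub_of_unit/corner_unitX.
apply/subsetP=> z _; have := mem_ideal z (mone M) (mone M).
by rewrite !mmulm1.
Qed.

End Rectangular.

Lemma corner_nonunit_nabla (M : finMonoid) (e m : M) : e \in idem M ->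
  e ** m ** e \notin units_of e -> e ** m ** e \in nabla (ideal e).
Proof.
move=> e_idem; apply: contraR; rewrite inE negbK => /subsetP/(_ e (mem_ideal_self e)).
have ee := idemP e_idem.
by apply: corner_unit; rewrite // !mmulA ee -mmulA ee.
Qed.

Section LinearExtension.

Variables (M : finMonoid) (k : fieldType) (A : lmodType k) (phi : {ffun M -> A}).

Lemma lin_ext_delta x : lin_ext phi (delta k x) = phi x.
Proof.
rewrite /lin_ext (bigD1 x) //= big1 => [|y /negbTE ne_yx]; rewrite ffunE.
  by rewrite eqxx scale1r addr0.
by rewrite ne_yx scale0r.
Qed.

Lemma lin_extD u v : lin_ext phi (u + v) = lin_ext phi u + lin_ext phi v.
Proof. by rewrite /lin_ext -big_split; apply: eq_bigr => y _; rewrite ffunE scalerDl. Qed.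

Lemma lin_extB u v : lin_ext phi (u - v) = lin_ext phi u - lin_ext phi v.
Proof. by rewrite /lin_ext -sumrB; apply: eq_bigr => y _; rewrite !ffunE scalerBl. Qed.

End LinearExtension.

Lemma scalable_morphB (k : fieldType) (A : lmodType k) (f : A -> A) :
  (forall c a b, f (c *: a + b) = c *: f a + f b) -> {morph f : a b / a - b}.
Proof.
move=> f_lin a b.
have f0 : f 0 = 0.
  have := f_lin 1 0 0; rewrite !scale1r addr0.
  by move/(congr1 (fun v => v - f 0)); rewrite subrr addrK.
have fN c : f (- c) = - f c.
  by have := f_lin (-1) c 0; rewrite !scaleN1r f0 !addr0.
by have := f_lin 1 a (- b); rewrite !scale1r fN.
Qed.

Section Bimodule.

Variables (M : finMonoid) (k : fieldType) (A : lmodType k).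
Variables (eX eY : M) (lY rX : M -> A -> A).
Hypothesis M_rect : rectangular M.
Hypotheses (eX_idem : eX \in idem M) (eY_idem : eY \in idem M).
Hypotheses (XnY : ~~ (ideal eX \subset ideal eY)) (YnX : ~~ (ideal eY \subset ideal eX)).
Hypothesis lY_lin : forall g c a b, g \in units_of eY -> lY g (c *: a + b) = c *: lY g a + lY g b.
Hypothesis rX_lin : forall h c a b, h \in units_of eX -> rX h (c *: a + b) = c *: rX h a + rX h b.
Hypothesis lY_id : forall a, lY eY a = a.
Hypothesis rX_id : forall a, rX eX a = a.

Local Notation X := (ideal eX).
Local Notation Y := (ideal eY).
Local Notation L := (actL Y eY lY).
Local Notation R := (actR X eX rX).
Local Notation der := (derivation X Y eX eY lY rX).

Lemma actLE m a :
  L m a = if eY ** m ** eY \in units_of eY then lY (eY ** m ** eY) a else 0.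
Proof.
rewrite /actL; case: (boolP (_ \in units_of eY)) => [u|_]; last by rewrite andbF.
by rewrite (ideal_sub_sigma M_rect eY_idem u).
Qed.

Lemma actRE a m :
  R a m = if eX ** m ** eX \in units_of eX then rX (eX ** m ** eX) a else 0.
Proof.
rewrite /actR; case: (boolP (_ \in units_of eX)) => [u|_]; last by rewrite andbF.
by rewrite (ideal_sub_sigma M_rect eX_idem u).
Qed.

Lemma actLB m : {morph L m : a b / a - b}.
Proof.
move=> a b; rewrite !actLE; case: ifP => [u|_]; last by rewrite subr0.
by apply: scalable_morphB => c x y; apply: lY_lin.
Qed.

Lemma actRB m : {morph R^~ m : a b / a - b}.
Proof.
move=> a b; rewrite !actRE; case: ifP => [u|_]; last by rewrite subr0.
by apply: scalable_morphB => c x y; apply: rX_lin.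
Qed.

Lemma actLD m : {morph L m : a b / a + b}.
Proof.
move=> a b; rewrite !actLE; case: ifP => [u|_]; last by rewrite addr0.
by rewrite -[a]scale1r lY_lin // !scale1r.
Qed.

Lemma actL0 m : L m 0 = 0.
Proof. by have := actLB m 0 0; rewrite subrr => ->; rewrite subrr. Qed.

Lemma actLN m a : L m (- a) = - L m a.
Proof. by rewrite -sub0r actLB actL0 sub0r. Qed.

Lemma actL_unit g a : g \in units_of eY -> L g a = lY g a.
Proof. by move=> u; rewrite actLE; case/units_ofP: (u) => -> _; rewrite u. Qed.

Lemma actR_unit h a : h \in units_of eX -> R a h = rX h a.
Proof. by move=> u; rewrite actRE; case/units_ofP: (u) => -> _; rewrite u. Qed.

Lemma actL_eY a : L eY a = a.
Proof. by rewrite actL_unit ?idem_unit. Qed.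

Lemma actR_eX a : R a eX = a.
Proof. by rewrite actR_unit ?idem_unit. Qed.

Lemma actR_eXl a q : R a (eX ** q) = R a q.
Proof. by rewrite !actRE mmulA (idemP eX_idem). Qed.

Lemma actR_eXr a q : R a (q ** eX) = R a q.
Proof. by rewrite !actRE mmulA -(mmulA _ eX eX) (idemP eX_idem). Qed.

Lemma actL_nabla m a : m \in nabla Y -> L m a = 0.
Proof. by rewrite inE actLE; case: ifP => // /ideal_sub_of_unit->. Qed.

Lemma actR_nabla m a : m \in nabla X -> R a m = 0.
Proof. by rewrite inE actRE; case: ifP => // /ideal_sub_of_unit->. Qed.

Lemma idealX_nabla x : x \in X -> x \in nabla Y.
Proof. by move=> /ideal_sub xX; rewrite inE; apply: contra YnX => /subset_trans; apply. Qed.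

Lemma idealY_nabla x : x \in Y -> x \in nabla X.
Proof. by move=> /ideal_sub xY; rewrite inE; apply: contra XnY => /subset_trans; apply. Qed.

Lemma actL_idealX x a : x \in X -> L x a = 0.
Proof. by move/idealX_nabla; apply: actL_nabla. Qed.

Lemma actR_idealY x a : x \in Y -> R a x = 0.
Proof. by move/idealY_nabla; apply: actR_nabla. Qed.

Lemma mem_nablaprod a b : a \in nabla Y -> b \in nabla X -> a ** b \in nablaprod Y X.
Proof. by move=> aY bX; apply/imset2P; exists a b. Qed.

Lemma mem_corner t : eY ** t ** eX \in corner eY eX.
Proof. by rewrite inE !mmulA (idemP eY_idem) -mmulA (idemP eX_idem). Qed.

Lemma corner_eYl x : x \in corner eY eX -> eY ** x = x.
Proof. by rewrite inE => /eqP <-; rewrite !mmulA (idemP eY_idem). Qed.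

Lemma corner_eXr x : x \in corner eY eX -> x ** eX = x.
Proof. by rewrite inE => /eqP <-; rewrite -mmulA (idemP eX_idem). Qed.

Lemma corner_idealX x : x \in corner eY eX -> x \in X.
Proof. by move=> /corner_eXr <-; apply: mem_idealMl. Qed.

Lemma corner_idealY x : x \in corner eY eX -> x \in Y.
Proof. by move=> /corner_eYl <-; apply: mem_idealMr. Qed.

Lemma mem_corner_mul p q : eY ** p = p -> q ** eX = q -> p ** q \in corner eY eX.
Proof. by move=> ep qe; rewrite inE mmulA ep -mmulA qe. Qed.

Definition corner_restr (d : {ffun M -> A}) : {ffun M -> A} :=
  [ffun x => if x \in corner eY eX then d x else 0].

Lemma corner_restr_linear c d1 d2 :
  corner_restr (c *: d1 + d2) = c *: corner_restr d1 + corner_restr d2.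
Proof.
by apply/ffunP=> x; rewrite !ffunE; case: ifP => // _; rewrite scaler0 addr0.
Qed.

Section Derivation.

Variable d : {ffun M -> A}.
Hypothesis d_der : der d.

Lemma der_Wrel p q :
  d (p ** q) + d (p ** (eY ** (eX ** q))) - d (p ** (eY ** q)) - d (p ** (eX ** q)) = 0.
Proof.
rewrite !d_der !actL_eY !actR_eXl (actL_idealX _ (mem_ideal_self eX)).
rewrite !(actR_idealY _ (mem_idealMr _ _)) !actLD !actL0 !addr0 add0r.
set a := L p (d q); set b := L p (R (d eY) q); set c := L p (R (d eX) q).
by apply/eqP; rewrite !subr_eq add0r addrACA [X in _ == X]addrACA [c + a]addrC.
Qed.

Lemma der_nablaprod z : z \in nablaprod Y X -> d z = 0.
Proof. by case/imset2P=> a b aY bX ->; rewrite d_der actL_nabla // actR_nabla // addr0. Qed.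

Lemma der_corner_equivariant g h x :
  g \in units_of eY -> h \in units_of eX -> x \in corner eY eX ->
  d (g ** x ** h) = lY g (rX h (d x)).
Proof.
move=> ug uh cx; rewrite -mmulA !d_der (actR_idealY _ (idealMr _ (corner_idealY cx))).
by rewrite (actL_idealX _ (corner_idealX cx)) add0r addr0 actL_unit // actR_unit.
Qed.

Lemma corner_restr_homV : homV X Y eX eY lY rX (corner_restr d).
Proof.
split.
- by move=> x /negbTE x_nc; rewrite ffunE x_nc.
- move=> w [[x /setIP[x_nab cx] ->] | [m [n ->]]].
    by rewrite lin_ext_delta ffunE cx der_nablaprod.
  have eXX t : t ** eX ** eX = t ** eX by rewrite -mmulA (idemP eX_idem).
  rewrite !lin_extB lin_extD !lin_ext_delta !ffunE !inE !mmulA (idemP eY_idem) !eXX !eqxx.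
  by have := der_Wrel (eY ** m) (n ** eX); rewrite !mmulA.
- move=> g h x ug uh cx; rewrite !ffunE cx der_corner_equivariant //.
  rewrite mem_corner_mul //; last by case/units_ofP: uh => /(corner_mulr eX_idem).
  by case/units_ofP: ug => /(corner_mull eY_idem) eg _; rewrite mmulA eg.
Qed.

End Derivation.

Definition der_of_hom (phi : {ffun M -> A}) : {ffun M -> A} :=
  [ffun m => phi (eY ** m ** eX) - phi (eY ** m ** eY ** eX)].

Section Hom.

Variable phi : {ffun M -> A}.
Hypothesis phi_hom : homV X Y eX eY lY rX phi.

Lemma hom_nablaprod z : z \in nablaprod Y X -> z \in corner eY eX -> phi z = 0.
Proof.
case: phi_hom => _ phiW _ zN zc; rewrite -lin_ext_delta; apply: phiW; left.
by exists z => //; apply/setIP.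
Qed.

Lemma hom_Wrel m n :
  phi (eY ** m ** n ** eX) - phi (eY ** m ** eY ** n ** eX) =
  phi (eY ** m ** eX ** n ** eX) - phi (eY ** m ** eY ** eX ** n ** eX).
Proof.
case: phi_hom => _ phiW _.
have W : lin_ext phi (delta k (eY ** m ** n ** eX) + delta k (eY ** m ** eY ** eX ** n ** eX)
   - delta k (eY ** m ** eY ** n ** eX) - delta k (eY ** m ** eX ** n ** eX)) = 0.
  by apply: phiW; right; exists m, n.
move: W; rewrite !lin_extB lin_extD !lin_ext_delta => W.
by rewrite -[RHS]add0r -W subrKA addrAC addrK.
Qed.

Lemma hom_actL m x : x \in corner eY eX -> L m (phi x) = phi (eY ** m ** eY ** x).
Proof.
case: phi_hom => _ _ phiE cx; rewrite actLE; case: ifP => [u|/negbT nu].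
  have := phiE _ _ _ u (idem_unit eX_idem) cx.
  by rewrite rX_id -mmulA (corner_eXr cx) => <-.
apply/esym/hom_nablaprod.
  exact: mem_nablaprod (corner_nonunit_nabla eY_idem nu) (idealY_nabla (corner_idealY cx)).
by apply: mem_corner_mul (corner_eXr cx); rewrite !mmulA (idemP eY_idem).
Qed.

Lemma hom_actR n x : x \in corner eY eX -> R (phi x) n = phi (x ** eX ** n ** eX).
Proof.
case: phi_hom => _ _ phiE cx; rewrite actRE -!mmulA mmulA; case: ifP => [u|/negbT nu].
  have := phiE _ _ _ (idem_unit eY_idem) u cx.
  by rewrite lY_id (corner_eYl cx) => <-.
apply/esym/hom_nablaprod.
  exact: mem_nablaprod (idealX_nabla (corner_idealX cx)) (corner_nonunit_nabla eX_idem nu).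
by apply: mem_corner_mul (corner_eYl cx) _; rewrite -mmulA (idemP eX_idem).
Qed.

Lemma der_of_hom_derivation : der (der_of_hom phi).
Proof.
have eYY t : t ** eY ** eY = t ** eY by rewrite -mmulA (idemP eY_idem).
have eXX t : t ** eX ** eX = t ** eX by rewrite -mmulA (idemP eX_idem).
have c_eY t : eY ** t ** eY ** eX \in corner eY eX by rewrite -(mmulA eY t) mem_corner.
move=> m n; rewrite !ffunE actLB actRB !hom_actL ?hom_actR ?mem_corner //.
rewrite !mmulA !eYY !eXX -(subrKA (phi (eY ** m ** eY ** n ** eX))) hom_Wrel addrC.
congr (_ - _ + _); apply/eqP; rewrite -subr_eq0.
have := hom_Wrel m (n ** eY); rewrite !mmulA => ->.
have Z a : phi (eY ** a ** eX ** n ** eY ** eX) = 0.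
  have := mem_nablaprod (idealX_nabla (mem_idealMl (eY ** a) eX))
                        (idealY_nabla (mem_ideal n eY eX)).
  move/hom_nablaprod; rewrite !mmulA; apply.
  by have := mem_corner (a ** eX ** n ** eY); rewrite !mmulA.
by rewrite Z -(mmulA eY m eY) Z subrr.
Qed.

Lemma corner_restr_der_of_hom : corner_restr (der_of_hom phi) = phi.
Proof.
case: phi_hom => phi0 _ _; apply/ffunP=> x; rewrite !ffunE.
case: ifP => [cx|/negbT ncx]; last by rewrite phi0.
have x_cX := corner_idealX cx.
rewrite inE in cx; rewrite (eqP cx) (hom_nablaprod (z := eY ** x ** eY ** eX)) ?subr0 //.
  rewrite -mmulA.
  exact: mem_nablaprod (idealX_nabla (idealMl _ x_cX)) (idealY_nabla (mem_idealMr _ _)).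
by rewrite -(mmulA eY x eY) mem_corner.
Qed.

End Hom.

Lemma corner_restr_eq0P d : der d ->
  corner_restr d = 0 <-> inner_derivation X Y eX eY lY rX d.
Proof.
move=> d_der; split=> [d0|[a da]]; last first.
  apply/ffunP=> x; rewrite !ffunE; case: ifP => // cx.
  by rewrite da actL_idealX ?actR_idealY ?corner_idealX ?corner_idealY ?subrr.
have dc x : x \in corner eY eX -> d x = 0.
  by move=> cx; have := congr1 (fun f : {ffun M -> A} => f x) d0; rewrite !ffunE cx.
exists (d eY) => m; rewrite -/(L m (d eY)) -/(R (d eY) m).
have ceYX : eY ** eX \in corner eY eX by have := mem_corner (mone M); rewrite mmulm1.
have deX : d eX = - d eY.
  by apply/eqP; rewrite -addr_eq0 -(dc _ ceYX) d_der actL_eY actR_eX.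
have := d_der eY (m ** eX); rewrite dc; last by rewrite mmulA mem_corner.
rewrite actL_eY actR_eXr d_der deX actLN actR_eX => E.
by apply/eqP; rewrite -subr_eq0 opprB E addrA addrC addrA.
Qed.

End Bimodule.

Unset Implicit Arguments.

Theorem mainTheorem14 (M : finMonoid) (k : fieldType) (X Y : {set M}) (eX eY : M)
    (A : lmodType k) (lY rX : M -> A -> A) :
  rectangular M ->
  splitting_field_maxsub M k ->
  eX \in idem M -> ideal eX = X ->
  eY \in idem M -> ideal eY = Y ->
  ~~ (X \subset Y) -> ~~ (Y \subset X) ->
  GYGXop_module eX eY lY rX ->
  exists Phi : {ffun M -> A} -> {ffun M -> A},
    [/\ forall d, derivation X Y eX eY lY rX d -> homV X Y eX eY lY rX (Phi d),
        forall c d1 d2, derivation X Y eX eY lY rX d1 -> derivation X Y eX eY lY rX d2 ->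
          Phi (c *: d1 + d2) = c *: Phi d1 + Phi d2,
        forall phi, homV X Y eX eY lY rX phi ->
          exists2 d, derivation X Y eX eY lY rX d & Phi d = phi &
        forall d, derivation X Y eX eY lY rX d ->
          (Phi d = 0 <-> inner_derivation X Y eX eY lY rX d)].
Proof.
move=> M_rect _ eX_idem <- eY_idem <- XnY YnX.
move=> [lY_lin [rX_lin [_ [lY_id [_ [rX_id _]]]]]].
exists (corner_restr eX eY); split.
- by move=> d d_der; apply: corner_restr_homV.
- by move=> c d1 d2 _ _; apply: corner_restr_linear.
- move=> phi phi_hom; exists (der_of_hom eX eY phi).
    exact: der_of_hom_derivation.
  exact: (corner_restr_der_of_hom eX_idem eY_idem XnY YnX phi_hom).
- by move=> d d_der; apply: corner_restr_eq0P.
Qed.
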